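(* Let $n$ be an odd integer with prime factorisation $n=p_1^{J_1}\cdots p_s^{J_s}$, where $s\ge2$, the $p_i$ are distinct primes, $J_i\ge1$, and $\prod_{i=1}^r p_i^{J_i}<p_{r+1}$ for every $r\in\{1,\dots,s-1\}$. If $\mathcal{D}_1,\mathcal{D}_2$ are sets of positive divisors of $n$ with $\sum_{d\in\mathcal{D}_1}\phi(n/d)=\sum_{d\in\mathcal{D}_2}\phi(n/d)$, then $\mathcal{D}_1=\mathcal{D}_2$.
   Context: $\phi$ is Euler's totient function. *)

From mathcomp Require Import all_boot.
Set Implicit Arguments. Unset Strict Implicit. Unset Printing Implicit Defensive.

(* If N < p with p prime, the divisors of N * p^J are the products d * p^k with
   d | N and k <= J, and phi (d * p^k) = phi d * phi (p^k). A sum of phi over a set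
   of divisors of N * p^J is thus sum_k phi (p^k) * S_k, where S_k is a sum of phi
   over a set of divisors of N, so that S_k <= sum_(d | N) phi d = N. When N < p - 1,
   which oddness of N and p forces from N < p, the weight phi (p^k) = (p - 1) p^(k-1)
   exceeds N times the sum p^(k-1) of the smaller weights, so the S_k are recovered
   as the digits of a mixed-radix expansion. Induction along the prime factorisation
   then shows that distinct sets of divisors of n have distinct phi-sums, and
   d |-> n / d permutes the divisors of n. *)

From mathcomp Require Import all_boot cyclic zify.
Set Implicit Arguments. Unset Strict Implicit. Unset Printing Implicit Defensive.

Lemma ltnS_odd m n : odd m -> odd n -> m < n -> m.+1 < n.
Proof.
move=> odd_m odd_n lt_mn; rewrite ltn_neqAle lt_mn andbT.
by apply: contraTneq odd_n => <- /=; rewrite odd_m.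
Qed.

Lemma dvdn_prod_prefix (F : nat -> nat) r s :
  r <= s -> \prod_(i < r) F i %| \prod_(i < s) F i.
Proof. by move=> le_rs; rewrite -(subnKC le_rs) big_split_ord dvdn_mulr. Qed.

Lemma coprime_ltn_prime p d : prime p -> 0 < d < p -> coprime p d.
Proof.
move=> p_pr /andP[d_gt0 lt_dp]; rewrite prime_coprime //.
by apply/negP => /(dvdn_leq d_gt0); lia.
Qed.

Lemma logn_mul_pfactor p d k : prime p -> coprime p d -> logn p (d * p ^ k) = k.
Proof. by move=> p_pr co_pd; rewrite logn_Gauss // pfactorK. Qed.

Lemma divn_divn_dvd n d : 0 < n -> d %| n -> n %/ (n %/ d) = d.
Proof. by move=> n_gt0 dv_dn; rewrite divnA // mulKn. Qed.

Lemma big_divisors (R : Type) (idx : R) (op : Monoid.com_law idx) n (F : nat -> R) :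
  0 < n -> \big[op/idx]_(m <- divisors n) F m = \big[op/idx]_(0 <= m < n.+1 | m %| n) F m.
Proof.
move=> n_gt0; rewrite -[RHS]big_filter; apply: perm_big.
apply: uniq_perm; [exact: divisors_uniq | exact/filter_uniq/iota_uniq |] => m.
rewrite mem_filter mem_iota -dvdn_divisors //; apply/idP/andP => [dv_mn | [] //].
by split=> //; have := dvdn_leq n_gt0 dv_mn; lia.
Qed.

Lemma sum_totient_divisors n : 0 < n -> \sum_(m <- divisors n) totient m = n.
Proof. by move=> n_gt0; rewrite big_divisors // big_mkord sum_totient_dvd. Qed.

Lemma perm_divisors_divn n : 0 < n -> perm_eq (divisors n) [seq n %/ d | d <- divisors n].
Proof.
move=> n_gt0; apply: uniq_perm; first exact: divisors_uniq.
  rewrite map_inj_in_uniq ?divisors_uniq // => d1 d2.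
  rewrite -!dvdn_divisors // => dv1 dv2 eq12.
  by rewrite -(divn_divn_dvd n_gt0 dv1) eq12 divn_divn_dvd.
move=> m; apply/idP/mapP => [|[d]]; rewrite -!dvdn_divisors //.
  by move=> dv_mn; exists (n %/ m); rewrite ?divn_divn_dvd // -dvdn_divisors // dvdn_div.
by move=> dv_dn ->; apply: dvdn_div.
Qed.

Lemma divisors_mul_pfactor N p J : prime p -> 0 < N -> coprime p N ->
  perm_eq (divisors (N * p ^ J)) [seq d * p ^ k | k <- iota 0 J.+1, d <- divisors N].
Proof.
move=> p_pr N_gt0 co_pN; have pk_gt0 k : 0 < p ^ k by rewrite expn_gt0 prime_gt0.
have NpJ_gt0 : 0 < N * p ^ J by rewrite muln_gt0 N_gt0 pk_gt0.
have co_p_div d : d \in divisors N -> coprime p d.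
  by rewrite -dvdn_divisors // => /coprime_dvdr; apply.
apply: uniq_perm; first exact: divisors_uniq.
  apply: allpairs_uniq; [exact: iota_uniq | exact: divisors_uniq |].
  move=> x y /allpairsP[[k d] [_ /co_p_div co_d ->]].
  move=> /allpairsP[[k' d'] [_ /co_p_div co_d' ->]] /= eq_dk.
  have eq_k : k = k' by rewrite -(logn_mul_pfactor k p_pr co_d) eq_dk logn_mul_pfactor.
  by move: eq_dk; rewrite eq_k => /eqP; rewrite eqn_pmul2r // => /eqP ->.
move=> m; rewrite -dvdn_divisors //; apply/idP/allpairsP => [dv_m | [[k d] [+ + ->]]].
  have [d co_pd def_m] := pfactor_coprime p_pr (dvdn_gt0 NpJ_gt0 dv_m).
  exists (logn p m, d); split=> //.
    rewrite mem_iota ltnS -(logn_mul_pfactor J p_pr co_pN).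
    exact: dvdn_leq_log.
  rewrite -dvdn_divisors // -(@Gauss_dvdl _ _ (p ^ J)) ?coprimeXr 1?coprime_sym //.
  by apply: dvdn_trans dv_m; rewrite {2}def_m dvdn_mulr.
rewrite mem_iota -dvdn_divisors // => /andP[_ le_kJ] dv_dN.
by rewrite dvdn_mul // dvdn_exp2l.
Qed.

Lemma sum_divisors_mul_pfactor N p J (F : nat -> nat) : prime p -> 0 < N -> coprime p N ->
  \sum_(m <- divisors (N * p ^ J)) F m * totient m =
  \sum_(k < J.+1) totient (p ^ k) * \sum_(d <- divisors N) F (d * p ^ k) * totient d.
Proof.
move=> p_pr N_gt0 co_pN; rewrite (perm_big _ (divisors_mul_pfactor J p_pr N_gt0 co_pN)).
rewrite big_allpairs_dep -[iota 0 J.+1]/(index_iota 0 J.+1) big_mkord.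
apply: eq_bigr => k _.
rewrite big_distrr big_seq [RHS]big_seq; apply: eq_bigr => d dv_dN /=.
have co_pd : coprime p d by apply: coprime_dvdr co_pN; rewrite dvdn_divisors.
by rewrite totient_coprime ?coprimeXr 1?coprime_sym // [RHS]mulnC mulnA.
Qed.

Lemma sum_totient_pfactor p k : prime p -> \sum_(j < k.+1) totient (p ^ j) = p ^ k.
Proof.
move=> p_pr; elim: k => [|k IHk]; first by rewrite big_ord1.
rewrite big_ord_recr /= IHk totient_pfactor // expnS.
by rewrite -mulSn prednK ?prime_gt0.
Qed.

Lemma leq_sum_totient_divisors N (c : nat -> bool) :
  0 < N -> \sum_(m <- divisors N) c m * totient m <= N.
Proof.
move=> N_gt0; rewrite -[leqRHS](sum_totient_divisors N_gt0).
by apply: leq_sum => m _; case: (c m); rewrite ?mul1n.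
Qed.

Lemma leq_weighted_sum K M (w a : nat -> nat) : (forall k, k < K -> a k <= M) ->
  \sum_(k < K) w k * a k <= M * \sum_(k < K) w k.
Proof.
move=> le_aM; rewrite big_distrr; apply: leq_sum => k _.
by rewrite mulnC leq_mul2r le_aM ?orbT.
Qed.

Lemma superincreasing_sum_inj K M (w a b : nat -> nat) :
  (forall k, k < K -> M * \sum_(j < k) w j < w k) ->
  (forall k, k < K -> a k <= M) -> (forall k, k < K -> b k <= M) ->
  \sum_(k < K) w k * a k = \sum_(k < K) w k * b k -> forall k, k < K -> a k = b k.
Proof.
elim: K => [//|K IHK] w_sup le_aM le_bM.
rewrite !big_ord_recr /= [w K * _]mulnC [w K * b K]mulnC => eq_sum.
have w_gt0 : 0 < w K by apply: leq_ltn_trans (w_sup K _).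
have digit (c : nat -> nat) : (forall k, k < K.+1 -> c k <= M) ->
    (\sum_(k < K) w k * c k + c K * w K) %/ w K = c K.
  move=> le_cM; rewrite divnDMl // divn_small //.
  apply: leq_ltn_trans (w_sup K _) => //.
  by apply: leq_weighted_sum => k lt_kK; apply: le_cM; apply: ltnW.
have eq_K : a K = b K by rewrite -(digit a) // -(digit b) // eq_sum.
move: eq_sum; rewrite eq_K => /addIn eq_prefix k; rewrite ltnS leq_eqVlt.
case/predU1P => [-> // | lt_kK].
by apply: IHK => // j lt_jK; [apply: w_sup | apply: le_aM | apply: le_bM]; apply: ltnW.
Qed.

Definition totient_sums_distinct N := forall a b : nat -> bool,
  \sum_(m <- divisors N) a m * totient m = \sum_(m <- divisors N) b m * totient m ->
  {in divisors N, a =1 b}.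

Lemma totient_sums_distinct1 : totient_sums_distinct 1.
Proof.
move=> a b; rewrite /divisors /= !big_seq1 => eq_ab m; rewrite inE => /eqP ->.
by case: (a 1) (b 1) eq_ab => [] [].
Qed.

Lemma totient_sums_distinct_mul_pfactor N p J : prime p -> 0 < N -> N.+1 < p ->
  totient_sums_distinct N -> totient_sums_distinct (N * p ^ J).
Proof.
move=> p_pr N_gt0 lt_Np distinct_N a b.
have co_pN : coprime p N by apply: coprime_ltn_prime; rewrite // N_gt0 ltnW.
rewrite !sum_divisors_mul_pfactor // => eq_sum.
have w_sup k : k < J.+1 -> N * \sum_(j < k) totient (p ^ j) < totient (p ^ k).
  case: k => [|k] _; first by rewrite big_ord0 muln0.
  rewrite sum_totient_pfactor // totient_pfactor //=.
  by rewrite ltn_pmul2r ?expn_gt0 ?prime_gt0 //; lia.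
have le_digit (c : nat -> bool) k : k < J.+1 ->
    \sum_(d <- divisors N) c (d * p ^ k) * totient d <= N.
  by move=> _; apply: leq_sum_totient_divisors.
have eq_digit := superincreasing_sum_inj w_sup (le_digit a) (le_digit b) eq_sum.
move=> m; rewrite (perm_mem (divisors_mul_pfactor J p_pr N_gt0 co_pN)).
case/allpairsP => [[k d] [+ dv_dN ->]]; rewrite mem_iota => /andP[_ lt_kJ].
exact: (distinct_N _ _ (eq_digit k lt_kJ)).
Qed.

Lemma sum_totient_divn_set n (D : {set 'I_n.+1}) : 0 < n ->
  (forall d : 'I_n.+1, d \in D -> (0 < d) && (d %| n)) ->
  \sum_(d in D) totient (n %/ d) =
  \sum_(m <- divisors n) ((inord (n %/ m) : 'I_n.+1) \in D) * totient m.
Proof.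
move=> n_gt0 sub_D; rewrite (perm_big _ (perm_divisors_divn n_gt0)) big_map.
transitivity (\sum_(m <- divisors n) ((inord m : 'I_n.+1) \in D) * totient (n %/ m));
  last first.
  by apply: eq_big_seq => m; rewrite -dvdn_divisors // => dv_mn; rewrite divn_divn_dvd.
rewrite big_divisors // big_mkord big_mkcond [RHS]big_mkcond /=; apply: eq_bigr => i _.
rewrite inord_val; case: (boolP (i \in D)) => [/sub_D/andP[_ ->] | _].
  by rewrite mul1n.
by case: ifP.
Qed.

Lemma eq_divisor_sets_totient n (D1 D2 : {set 'I_n.+1}) :
  0 < n -> totient_sums_distinct n ->
  (forall d : 'I_n.+1, d \in D1 -> (0 < d) && (d %| n)) ->
  (forall d : 'I_n.+1, d \in D2 -> (0 < d) && (d %| n)) ->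
  \sum_(d in D1) totient (n %/ d) = \sum_(d in D2) totient (n %/ d) -> D1 = D2.
Proof.
move=> n_gt0 distinct_n sub_D1 sub_D2.
rewrite !sum_totient_divn_set // => /distinct_n eq_D; apply/setP => d.
have [/andP[d_gt0 dv_dn] | not_dv] := boolP ((0 < d) && (d %| n)).
  have := eq_D (n %/ d).
  by rewrite -dvdn_divisors ?dvdn_div ?divn_divn_dvd ?inord_val //; apply.
by rewrite (contraNF (sub_D1 d) not_dv) (contraNF (sub_D2 d) not_dv).
Qed.

Theorem lemma3p4 (n s : nat) (p J : seq nat)
  (D1 D2 : {set 'I_n.+1}) :
  odd n ->
  2 <= s ->
  size p = s -> size J = s ->
  uniq p ->
  (forall i, i < s -> prime (nth 0 p i)) ->
  (forall i, i < s -> 1 <= nth 0 J i) ->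
  n = \prod_(i < s) nth 0 p i ^ nth 0 J i ->
  (forall r, 1 <= r <= s - 1 ->
     \prod_(i < r) nth 0 p i ^ nth 0 J i < nth 0 p r) ->
  (forall d : 'I_n.+1, d \in D1 -> (0 < d) && (d %| n)) ->
  (forall d : 'I_n.+1, d \in D2 -> (0 < d) && (d %| n)) ->
  \sum_(d in D1) totient (n %/ d) = \sum_(d in D2) totient (n %/ d) ->
  D1 = D2.
Proof.
move=> odd_n _ _ _ _ p_pr J_gt0 def_n lt_prefix sub_D1 sub_D2 eq_sum.
pose N r := \prod_(i < r) nth 0 p i ^ nth 0 J i.
have odd_N r : r <= s -> odd (N r).
  move=> le_rs; apply: dvdn_odd odd_n; rewrite def_n.
  exact: (dvdn_prod_prefix (fun i => nth 0 p i ^ nth 0 J i)).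
have distinct_N r : r <= s -> totient_sums_distinct (N r).
  elim: r => [_ | r IHr lt_rs].
    by rewrite /N big_ord0; apply: totient_sums_distinct1.
  have odd_Nr := odd_N r (ltnW lt_rs).
  have odd_pr : odd (nth 0 p r).
    move: (odd_N _ lt_rs); rewrite /N big_ord_recr oddM oddX => /andP[_].
    by rewrite -[_ == 0]negbK -lt0n J_gt0.
  have lt_Npr : N r < nth 0 p r.
    case: r {IHr odd_Nr odd_pr} lt_rs => [lt_0s | r lt_rs]; last by apply: lt_prefix; lia.
    by rewrite /N big_ord0 prime_gt1 ?p_pr.
  rewrite /N big_ord_recr /= -/(N r).
  apply: totient_sums_distinct_mul_pfactor (p_pr r lt_rs) (odd_gt0 odd_Nr) _ _.
    exact: ltnS_odd.
  exact: IHr (ltnW lt_rs).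
apply: eq_divisor_sets_totient (odd_gt0 odd_n) _ sub_D1 sub_D2 eq_sum.
by rewrite def_n; apply: distinct_N.
Qed.
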